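(* Let $p\in\mathrm{CycPF}_n$ be a cyclic parking function with classical outcome $\mathrm{Inc}_i^n$ (so car $i$ ends up in spot $1$). Then $i=\min\Psi(p)$, the smallest element of the permutation component $\Psi(p)$.
   Context: Classical parking process on $n$ spots for $p\in[n]^n$: cars $1,\dots,n$ enter in order; car $i$ parks in the first unoccupied spot $k\ge p_i$, failing if none. If all park, the outcome $\pi$ has $\pi_k$ = car in spot $k$, and the displacement vector is $\mathrm{disp}(p)=(d_1,\dots,d_n)$, $d_i=\pi^{-1}_i-p_i$. $\mathrm{Inc}_i^n:=i(i+1)\cdots n\,12\cdots(i-1)$; $\mathrm{CycPF}_n$ is the set of parking preferences for which all cars park and the outcome is $\mathrm{Inc}_i^n$ for some $i$. For a permutation $\sigma=\sigma_1\cdots\sigma_n$, an inversion is a pair $(a,b)$ with $a>b$ and $a$ appearing before $b$; $\mathrm{inv}_a(\sigma)$ is the number of $b<a$ with $(a,b)$ an inversion, and $\mathrm{InvSeq}(\sigma)=(\mathrm{inv}_1(\sigma),\dots,\mathrm{inv}_n(\sigma))$; $\mathrm{InvSeq}$ is a bijection from $S_n$ onto the sequences $(a_1,\dots,a_n)$ with $0\le a_k<k$. A component of $\sigma$ is a contiguous block $\sigma_a\cdots\sigma_b$ with $\{\sigma_a,\dots,\sigma_b\}=\{a,\dots,b\}$ that is minimal for inclusion; every permutation decomposes uniquely into components. $\Psi(p)$ is defined as the component containing $i$ of the unique permutation $\sigma$ with $\mathrm{InvSeq}(\sigma)=\mathrm{disp}(p)$, where $\mathrm{Inc}_i^n$ is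 the outcome of $p$. *)

(* Everything is 1-indexed: spots, cars and permutation
   values live in {1,...,n}; sequences are stored as seq nat. *)
From mathcomp Require Import all_boot.
Set Implicit Arguments. Unset Strict Implicit. Unset Printing Implicit Defensive.

Definition is_pref (n : nat) (p : seq nat) : bool :=
  (size p == n) && all (fun a => (1 <= a) && (a <= n)) p.

(* Classical parking process.  [park_aux n occ p] lets the cars of p enter
   in order, [occ] being the already occupied spots; it returns
   [Some s] where s_j is the spot of the j-th car, or [None] if a car fails. *)
Fixpoint park_aux (n : nat) (occ : seq nat) (p : seq nat) : option (seq nat) :=
  match p with
  | [::] => Some [::]
  | a :: p' =>
      match [seq k <- iota a (n.+1 - a) | k \notin occ] with
      | [::] => None
      | k :: _ => omap (cons k) (park_aux n (k :: occ) p')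
      end
  end.

(* spots p = Some (pi^{-1}_1, ..., pi^{-1}_n) when all cars park *)
Definition spots (n : nat) (p : seq nat) : option (seq nat) := park_aux n [::] p.

(* outcome pi from the spot list s: pi_k = car parked in spot k *)
Definition outcome_of (n : nat) (s : seq nat) : seq nat :=
  [seq (index k s).+1 | k <- iota 1 n].

Definition Inc (n i : nat) : seq nat := iota i (n.+1 - i) ++ iota 1 (i.-1).

Definition disp_of (s p : seq nat) : seq nat := [seq x.1 - x.2 | x <- zip s p].

Definition is_perm (n : nat) (sigma : seq nat) : bool := perm_eq sigma (iota 1 n).

Definition inv_at (sigma : seq nat) (a : nat) : nat :=
  count (fun b => index a sigma < index b sigma) (iota 1 a.-1).

Definition InvSeq (n : nat) (sigma : seq nat) : seq nat :=
  [seq inv_at sigma a | a <- iota 1 n].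

Definition split_at (sigma : seq nat) (k : nat) : bool :=
  perm_eq (take k sigma) (iota 1 k).

(* [a,b] (positions) is a component of sigma: a-1 and b are consecutive
   split points of sigma. *)
Definition is_component (n : nat) (sigma : seq nat) (a b : nat) : bool :=
  [&& 1 <= a, a <= b, b <= n, split_at sigma a.-1, split_at sigma b &
      all (fun k => ~~ split_at sigma k) (iota a (b - a))].

Definition block (sigma : seq nat) (a b : nat) : seq nat :=
  [seq nth 0 sigma k.-1 | k <- iota a (b.+1 - a)].

Definition seqmin (s : seq nat) : nat := foldr minn (head 0 s) s.

(* Cars i, ..., n fill spots 1, ..., n - i + 1 in order, so car a >= i has
   displacement at most a - i, i.e. inv_a(sigma) <= a - i.  A value a >= i
   sitting among the first i - 1 positions of sigma would have more than
   a - i smaller values after it, hence {sigma_1, ..., sigma_(i-1)} =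
   {1, ..., i-1}: i - 1 is a split point, the component containing i starts
   at position i, and its entries are at least i.  Existence of sigma holds
   because every displacement vector satisfies d_j < j: the spots skipped by
   car j are occupied by earlier cars. *)

From mathcomp Require Import all_boot zify.

Set Implicit Arguments.
Unset Strict Implicit.
Unset Printing Implicit Defensive.

Lemma first_free_spot_sub_le (occ : seq nat) a m k l :
  uniq occ -> [seq x <- iota a m | x \notin occ] = k :: l -> k - a <= size occ.
Proof.
move=> Uocc Efree.
have : k \in [seq x <- iota a m | x \notin occ] by rewrite Efree mem_head.
rewrite mem_filter mem_iota => /and3P [_ Hak Hkm].
have Hsorted : sorted ltn (k :: l).
  by rewrite -Efree sorted_filter ?iota_ltn_sorted //; exact: ltn_trans.
have Hmin := order_path_min ltn_trans Hsorted.
rewrite -(size_iota a (k - a)); apply: uniq_leq_size (iota_uniq _ _) _.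
move=> x; rewrite mem_iota => Hx; apply: contraT => Hxo.
have : x \in k :: l by rewrite -Efree mem_filter Hxo mem_iota; lia.
by rewrite inE => /predU1P [Exk | /(allP Hmin)]; lia.
Qed.

Lemma park_aux_disp_le n occ p s : uniq occ -> park_aux n occ p = Some s ->
  size s = size p /\ forall j, nth 0 s j - nth 0 p j <= size occ + j.
Proof.
elim: p occ s => [|a p IH] occ s Uocc /=.
  by case=> <-; split=> // j; rewrite nth_nil.
case Efree: [seq k <- iota a (n.+1 - a) | k \notin occ] => [|k l] //.
case Erest: (park_aux n (k :: occ) p) => [s'|] //= [<-].
have : k \in [seq k <- iota a (n.+1 - a) | k \notin occ] by rewrite Efree mem_head.
rewrite mem_filter => /andP [Hk _].
have [Hsz Hs'] := IH (k :: occ) s' (introT andP (conj Hk Uocc)) Erest.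
split=> [|[|j]] /=; first by rewrite Hsz.
  by rewrite addn0 (first_free_spot_sub_le Uocc Efree).
by rewrite addnS -addSn; exact: Hs' j.
Qed.

Lemma nth_disp_of s p j :
  size s = size p -> nth 0 (disp_of s p) j = nth 0 s j - nth 0 p j.
Proof.
move=> Hsz; have [Hj | Hj] := ltnP j (size p).
  by rewrite (nth_map (0, 0)) ?size_zip ?Hsz ?minnn // nth_zip.
by rewrite !nth_default ?size_map ?size_zip ?Hsz ?minnn.
Qed.

Lemma spots_disp_le n p s : spots n p = Some s ->
  size s = size p /\ forall j, nth 0 (disp_of s p) j <= j.
Proof.
move=> /(park_aux_disp_le (isT : uniq [::])) [Hsz Hle].
by split=> // j; rewrite nth_disp_of //; exact: Hle.
Qed.

Definition insert_at (T : Type) (m : nat) (x : T) (s : seq T) : seq T :=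
  take m s ++ x :: drop m s.

Lemma perm_insert_at (T : eqType) m (x : T) s : perm_eq (insert_at m x s) (x :: s).
Proof. by rewrite /insert_at -cat1s perm_catCA /= cat_take_drop. Qed.

Lemma index_insert_at (T : eqType) m (x y : T) s : y != x -> m <= size s ->
  index y (insert_at m x s) = index y s + (m <= index y s).
Proof.
move=> Hyx Hm; have Hst : size (take m s) = m by rewrite size_takel.
have Hys : index y s = index y (take m s ++ drop m s) by rewrite cat_take_drop.
rewrite Hys /insert_at !index_cat /= eq_sym (negbTE Hyx) Hst.
case: ifP => [|_]; last by rewrite leq_addr addnS addn1.
by rewrite -index_mem Hst ltnNge => /negbTE ->; rewrite addn0.
Qed.

Lemma index_insert_at_new (T : eqType) m (x : T) s : x \notin s -> m <= size s ->
  index x (insert_at m x s) = m.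
Proof.
move=> Hx Hm; rewrite /insert_at index_cat ifN ?size_takel //= ?eqxx ?addn0 //.
by apply: contra Hx; apply: mem_take.
Qed.

Lemma count_index_ge (T : eqType) (s : seq T) m : uniq s ->
  count (fun b => m <= index b s) s = size s - m.
Proof.
move=> Us; set P := fun b => _.
have := Us; rewrite -{1}(cat_take_drop m s) cat_uniq => /and3P [_ /hasPn Hdisj _].
rewrite -{1}(cat_take_drop m s) count_cat.
rewrite (@eq_in_count _ P pred0 (take m s)) => [|b /index_ltn Hb]; last first.
  by rewrite /P leqNgt Hb.
rewrite (@eq_in_count _ P predT (drop m s)) => [|b Hb]; last first.
  have Hbs : b \in s by rewrite -(cat_take_drop m s) mem_cat Hb orbT.
  by rewrite /P leqNgt -(in_take _ Hbs) (negbTE (Hdisj b Hb)).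
by rewrite count_pred0 count_predT size_drop.
Qed.

Lemma InvSeqS n sigma :
  InvSeq n.+1 sigma = rcons (InvSeq n sigma) (inv_at sigma n.+1).
Proof.
rewrite /InvSeq; have -> : iota 1 n.+1 = iota 1 n ++ [:: n.+1].
  by have := iotaD 1 n 1; rewrite addn1 add1n.
by rewrite map_cat cats1.
Qed.

Section InsertMax.

Variables (n m : nat) (s : seq nat).
Hypotheses (Hs : is_perm n s) (Hm : m <= n).

Let Us : uniq s. Proof. by rewrite (perm_uniq Hs) iota_uniq. Qed.
Let Ss : size s = n. Proof. by rewrite (perm_size Hs) size_iota. Qed.
Let max_notin : n.+1 \notin s. Proof. by rewrite (perm_mem Hs) mem_iota ltnn andbF. Qed.

Lemma is_perm_insert_max : is_perm n.+1 (insert_at m n.+1 s).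
Proof.
apply: perm_trans (perm_insert_at _ _ _) _.
rewrite /is_perm; have := iotaD 1 n 1; rewrite addn1 add1n => ->.
by rewrite perm_sym perm_catC /= perm_cons perm_sym.
Qed.

Lemma inv_at_insert_max_old a : a <= n -> inv_at (insert_at m n.+1 s) a = inv_at s a.
Proof.
move=> Ha; apply: eq_in_count => b; rewrite mem_iota => Hb /=.
rewrite !index_insert_at ?Ss //; try by apply/eqP; lia.
by case: (leqP m (index a s)); case: (leqP m (index b s)); lia.
Qed.

Lemma inv_at_insert_max_new : inv_at (insert_at m n.+1 s) n.+1 = n - m.
Proof.
rewrite /inv_at /= index_insert_at_new ?Ss //.
rewrite (@eq_in_count _ _ (fun b => m <= index b s)) => [|b]; last first.
  rewrite mem_iota => Hb /=; rewrite index_insert_at ?Ss //; last by apply/eqP; lia.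
  by case: leqP; lia.
by rewrite -(permP Hs) count_index_ge // Ss.
Qed.

End InsertMax.

Lemma InvSeq_surj n d : size d = n -> (forall j, nth 0 d j <= j) ->
  exists sigma, is_perm n sigma /\ InvSeq n sigma = d.
Proof.
elim: n d => [|n IH] d; first by move/size0nil => -> _; exists [::].
case/lastP: d => [|d x] //; rewrite size_rcons => -[Hsz] Hd.
have [s [Hs Hinv]] : exists s, is_perm n s /\ InvSeq n s = d.
  apply: IH => // j; have [Hj | Hj] := ltnP j n; last by rewrite nth_default ?Hsz.
  by have := Hd j; rewrite nth_rcons Hsz Hj.
have Hx : x <= n by have := Hd n; rewrite nth_rcons Hsz ltnn eqxx.
exists (insert_at (n - x) n.+1 s); split; first exact: is_perm_insert_max.
rewrite InvSeqS inv_at_insert_max_new ?subKn ?leq_subr //; congr rcons.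
rewrite -Hinv; apply/eq_in_map => a; rewrite mem_iota => Ha.
by apply: inv_at_insert_max_old; lia.
Qed.

Lemma inv_at_ge_index (sigma : seq nat) a :
  a \in sigma -> a.-1 - index a sigma <= inv_at sigma a.
Proof.
move=> Ha; rewrite /inv_at; set j := index a sigma.
have Hbefore : count (fun b => index b sigma <= j) (iota 1 a.-1) <= j.
  have Hsub : {subset [seq b <- iota 1 a.-1 | index b sigma <= j] <= take j sigma}.
    move=> b; rewrite mem_filter mem_iota => /andP [Hbj Hb].
    rewrite in_take_leq ?index_size // ltn_neqAle Hbj andbT.
    apply/eqP => Eba; have Hbs : b \in sigma by rewrite -index_mem Eba index_mem.
    by move: Hb; rewrite -(nth_index 0 Hbs) Eba nth_index //; lia.
  rewrite -size_filter; apply: leq_trans (uniq_leq_size _ Hsub) _.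
    by rewrite filter_uniq ?iota_uniq.
  by rewrite size_takel ?index_size.
have := count_predC (fun b => j < index b sigma) (iota 1 a.-1).
rewrite size_iota (@eq_count _ (predC _) (fun b => index b sigma <= j)) => [|b].
  by lia.
by rewrite /= -leqNgt.
Qed.

Lemma seqmin_eq (s : seq nat) x : x \in s -> all (leq x) s -> seqmin s = x.
Proof.
have Hle d r : x \in r -> foldr minn d r <= x.
  elim: r => //= y r IH; rewrite inE => /predU1P [<- | /IH]; first exact: geq_minl.
  exact: leq_trans (geq_minr _ _).
have Hge d r : x <= d -> all (leq x) r -> x <= foldr minn d r.
  by move=> Hd; elim: r => //= y r IH /andP [Hy /IH]; rewrite leq_min Hy.
rewrite /seqmin; case: s => [//|h t] Hx Hall.
by apply/eqP; rewrite eqn_leq Hle // Hge //; case/andP: Hall.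
Qed.

Section SplitPoints.

Variables (n : nat) (sigma : seq nat).
Hypothesis Hperm : is_perm n sigma.

Let Us : uniq sigma. Proof. by rewrite (perm_uniq Hperm) iota_uniq. Qed.
Let Ss : size sigma = n. Proof. by rewrite (perm_size Hperm) size_iota. Qed.
Let mem_sigma y : (y \in sigma) = (0 < y <= n).
Proof. by rewrite (perm_mem Hperm) mem_iota add1n ltnS. Qed.

Lemma split_at_nth_le k q : split_at sigma k -> q < n ->
  (nth 0 sigma q <= k) = (q < k).
Proof.
move=> Hk Hq.
have Hw : nth 0 sigma q \in sigma by rewrite mem_nth ?Ss.
have Hw1 : 0 < nth 0 sigma q by move: Hw; rewrite mem_sigma => /andP [].
rewrite -{2}(index_uniq 0 (_ : q < size sigma) Us) ?Ss // -in_take //.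
by rewrite (perm_mem Hk) mem_iota add1n ltnS Hw1.
Qed.

Lemma split_at_of_take_le k : k <= n -> {in take k sigma, forall x, x <= k} ->
  split_at sigma k.
Proof.
move=> Hk Hle.
have Hsub : {subset take k sigma <= iota 1 k}.
  move=> x Hx; rewrite mem_iota add1n ltnS Hle // andbT.
  by move: (mem_take Hx); rewrite mem_sigma => /andP [].
have Ht : uniq (take k sigma) by apply: take_uniq.
have Hsz : size (iota 1 k) <= size (take k sigma) by rewrite size_iota size_takel ?Ss.
have [_ Heq] := uniq_min_size Ht Hsub Hsz.
by rewrite /split_at (uniq_perm Ht (iota_uniq 1 k) Heq).
Qed.

Lemma split_at_of_inv_at_le k : k <= n ->
  (forall a, k < a <= n -> inv_at sigma a <= a - k.+1) -> split_at sigma k.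
Proof.
move=> Hk Hinv; apply: split_at_of_take_le => // x Hx.
rewrite leqNgt; apply/negP => Hkx.
have Hxs := mem_take Hx.
have Hidx := index_ltn Hx.
have := inv_at_ge_index Hxs; move: Hxs; rewrite mem_sigma => /andP [_ Hxn].
have := Hinv x; rewrite Hkx Hxn => /(_ isT); lia.
Qed.

Lemma block_entries_range a b v : is_component n sigma a b ->
  v \in block sigma a b -> a <= v <= b.
Proof.
case/and5P => Ha _ Hbn Hsa /andP [Hsb _] /mapP [q]; rewrite mem_iota => Hq ->.
have Hq1 : q.-1 < n by lia.
have := split_at_nth_le Hsb Hq1; have := split_at_nth_le Hsa Hq1; lia.
Qed.

Lemma component_min i a b : split_at sigma i.-1 -> 0 < i ->
  is_component n sigma a b -> i \in block sigma a b -> i = seqmin (block sigma a b).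
Proof.
move=> Hsi Hi Hc Hib.
have /andP [Hai Hib'] := block_entries_range Hc Hib.
have Hia : i = a.
  apply/eqP; rewrite eqn_leq Hai andbT leqNgt; apply/negP => Hlt.
  case/and5P: Hc => _ _ _ _ /andP [_ /allP Hnone].
  have : i.-1 \in iota a (b - a) by rewrite mem_iota; lia.
  by move/Hnone; rewrite Hsi.
subst i; symmetry; apply: seqmin_eq => //.
by apply/allP => v /(block_entries_range Hc) /andP [].
Qed.

End SplitPoints.

Lemma nth_InvSeq n sigma j : j < n -> nth 0 (InvSeq n sigma) j = inv_at sigma j.+1.
Proof. by move=> Hj; rewrite (nth_map 0) ?size_iota // nth_iota // add1n. Qed.

Lemma spot_of_Inc n i s a : size s = n -> outcome_of n s = Inc n i ->
  0 < i <= a -> a <= n -> nth 0 s a.-1 = a - i + 1.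
Proof.
move=> Hsz Hout Hia Han.
have := congr1 (nth 0 ^~ (a - i)) Hout.
rewrite /outcome_of /Inc (nth_map 0) ?size_iota ?nth_iota; try lia.
rewrite nth_cat size_iota ifT ?nth_iota; try lia.
move=> Hidx; have Hix : index (1 + (a - i)) s = a.-1 by lia.
have Hmem : 1 + (a - i) \in s by rewrite -index_mem Hix Hsz; lia.
by rewrite -Hix nth_index // addnC.
Qed.

Lemma disp_Inc_le n i p s a : is_pref n p -> spots n p = Some s ->
  outcome_of n s = Inc n i -> 0 < i <= a -> a <= n ->
  nth 0 (disp_of s p) a.-1 <= a - i.
Proof.
case/andP=> /eqP Hp Hall /spots_disp_le [Hsz _] Hout Hia Han.
rewrite nth_disp_of // (spot_of_Inc _ Hout) ?Hsz //.
have := allP Hall (nth 0 p a.-1) (mem_nth 0 (_ : a.-1 < size p)).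
rewrite Hp; lia.
Qed.

Theorem lemma3p8 (n i : nat) (p s : seq nat) :
  is_pref n p ->
  spots n p = Some s ->
  1 <= i <= n ->
  outcome_of n s = Inc n i ->
  (exists sigma, is_perm n sigma /\ InvSeq n sigma = disp_of s p) /\
  (forall sigma, is_perm n sigma -> InvSeq n sigma = disp_of s p ->
     forall a b, is_component n sigma a b -> i \in block sigma a b ->
       i = seqmin (block sigma a b)).
Proof.
move=> Hpref Hspots /andP [Hi Hin] Hout.
have [Hsz Hdisp] := spots_disp_le Hspots.
have Hp : size p = n by case/andP: Hpref => /eqP.
split.
  by apply: InvSeq_surj Hdisp; rewrite size_map size_zip Hsz minnn.
move=> sigma Hperm Hinv a b Hcomp Hib.
apply: (component_min Hperm _ Hi Hcomp Hib).
apply: (split_at_of_inv_at_le Hperm) => [|c Hc]; first lia.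
have -> : inv_at sigma c = nth 0 (InvSeq n sigma) c.-1.
  by rewrite nth_InvSeq prednK //; lia.
by rewrite Hinv; apply: leq_trans (disp_Inc_le Hpref Hspots Hout _ _) _; lia.
Qed.
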